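(* Let $(X,\widetilde{\tau},\mathfrak{a}_E,E)$ be a soft aura topological space. Then: (i) an arbitrary soft union of soft $\mathfrak{a}$-semi-open sets is soft $\mathfrak{a}$-semi-open; (ii) an arbitrary soft union of soft $\mathfrak{a}$-pre-open sets is soft $\mathfrak{a}$-pre-open; (iii) an arbitrary soft union of soft $\mathfrak{a}$-$\beta$-open sets is soft $\mathfrak{a}$-$\beta$-open.
   Context: Let $X$ be a nonempty set and $E$ a nonempty parameter set. A soft set over $X$ is a map $F:E\to\mathcal{P}(X)$, written $(F,E)$; $\mathrm{SS}(X,E)$ denotes all soft sets; $\sqsubseteq$ and (arbitrary) soft union $\bigsqcup$ are parameterwise inclusion and union. A soft topology $\widetilde{\tau}$ is a subfamily of $\mathrm{SS}(X,E)$ containing the soft sets with all values $\emptyset$ and all values $X$, closed under arbitrary soft unions and finite soft intersections. A soft scope function is a map $\mathfrak{a}_E:X\to\widetilde{\tau}$ with $x\in\mathfrak{a}_E(x)(e)$ for all $x\in X$, $e\in E$; $(X,\widetilde{\tau},\mathfrak{a}_E,E)$ is a soft aura topological space. $\mathrm{cl}_{\mathfrak{a}}(G,E)(e)=\{x:\mathfrak{a}_E(x)(e)\cap G(e)\neq\emptyset\}$, $\mathrm{int}_{\mathfrak{a}}(G,E)(e)=\{x:\mathfrak{a}_E(x)(e)\subseteq G(e)\}$. $(G,E)$ is soft $\mathfrak{a}$-semi-open if $(G,E)\sqsubseteq\mathrm{cl}_{\mathfrak{a}}(\mathrm{int}_{\mathfrak{a}}(G,E))$; soft $\mathfrak{a}$-pre-open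 if $(G,E)\sqsubseteq\mathrm{int}_{\mathfrak{a}}(\mathrm{cl}_{\mathfrak{a}}(G,E))$; soft $\mathfrak{a}$-$\beta$-open if $(G,E)\sqsubseteq\mathrm{cl}_{\mathfrak{a}}(\mathrm{int}_{\mathfrak{a}}(\mathrm{cl}_{\mathfrak{a}}(G,E)))$. *)

Definition softset (X E : Type) := E -> X -> Prop.

Definition soft_sub {X E : Type} (F G : softset X E) : Prop :=
  forall e x, F e x -> G e x.

Definition soft_null {X E : Type} : softset X E := fun _ _ => False.
Definition soft_abs {X E : Type} : softset X E := fun _ _ => True.

Definition soft_bigunion {X E I : Type} (F : I -> softset X E) : softset X E :=
  fun e x => exists i, F i e x.

Definition soft_inter {X E : Type} (F G : softset X E) : softset X E :=
  fun e x => F e x /\ G e x.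

Definition is_soft_topology {X E : Type} (tau : softset X E -> Prop) : Prop :=
  tau soft_null /\ tau soft_abs /\
  (forall (I : Type) (F : I -> softset X E),
      (forall i, tau (F i)) -> tau (soft_bigunion F)) /\
  (forall F G, tau F -> tau G -> tau (soft_inter F G)).

Definition is_soft_scope {X E : Type} (tau : softset X E -> Prop)
  (a : X -> softset X E) : Prop :=
  (forall x, tau (a x)) /\ (forall x e, a x e x).

Definition soft_acl {X E : Type} (a : X -> softset X E) (G : softset X E)
  : softset X E :=
  fun e x => exists y, a x e y /\ G e y.

Definition soft_aint {X E : Type} (a : X -> softset X E) (G : softset X E)
  : softset X E :=
  fun e x => forall y, a x e y -> G e y.

Definition soft_a_semi_open {X E : Type} (a : X -> softset X E) (G : softset X E) :=
  soft_sub G (soft_acl a (soft_aint a G)).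

Definition soft_a_pre_open {X E : Type} (a : X -> softset X E) (G : softset X E) :=
  soft_sub G (soft_aint a (soft_acl a G)).

Definition soft_a_beta_open {X E : Type} (a : X -> softset X E) (G : softset X E) :=
  soft_sub G (soft_acl a (soft_aint a (soft_acl a G))).

(* Each of the three operators [cl_a o int_a], [int_a o cl_a] and
   [cl_a o int_a o cl_a] is monotone, being a composite of the monotone
   operators [cl_a] and [int_a]. The three classes of sets are the
   post-fixed points [G ⊑ op G] of these operators, and post-fixed points of a
   monotone operator are closed under arbitrary unions: each member satisfies
   [G_i ⊑ op G_i ⊑ op (⋃ G)]. *)


Section SoftOperators.

Variables X E : Type.

Definition soft_monotone (op : softset X E -> softset X E) : Prop :=
  forall F G, soft_sub F G -> soft_sub (op F) (op G).

Lemma soft_sub_bigunion (I : Type) (F : I -> softset X E) (i : I) :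
  soft_sub (F i) (soft_bigunion F).
Proof. intros e x Hx. exists i. exact Hx. Qed.

Lemma soft_monotone_comp (op1 op2 : softset X E -> softset X E) :
  soft_monotone op1 -> soft_monotone op2 ->
  soft_monotone (fun G => op1 (op2 G)).
Proof. intros H1 H2 F G HFG. apply H1, H2, HFG. Qed.

Lemma soft_acl_monotone (a : X -> softset X E) : soft_monotone (soft_acl a).
Proof.
  intros F G HFG e x [y [Hxy HFy]]. exists y. split; [exact Hxy | exact (HFG e y HFy)].
Qed.

Lemma soft_aint_monotone (a : X -> softset X E) : soft_monotone (soft_aint a).
Proof. intros F G HFG e x HF y Hxy. exact (HFG e y (HF y Hxy)). Qed.

Lemma soft_bigunion_postfixed (op : softset X E -> softset X E)
  (I : Type) (F : I -> softset X E) :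
  soft_monotone op -> (forall i, soft_sub (F i) (op (F i))) ->
  soft_sub (soft_bigunion F) (op (soft_bigunion F)).
Proof.
  intros Hop HF e x [i Hx].
  exact (Hop _ _ (soft_sub_bigunion I F i) e x (HF i e x Hx)).
Qed.

End SoftOperators.

Arguments soft_monotone_comp {X E op1 op2}.
Arguments soft_bigunion_postfixed {X E} op {I} F.

Theorem theorem4p4 (X E : Type) (x0 : X) (e0 : E)
  (tau : softset X E -> Prop) (a : X -> softset X E)
  (Htau : is_soft_topology tau) (Ha : is_soft_scope tau a) :
  (forall (I : Type) (F : I -> softset X E),
      (forall i, soft_a_semi_open a (F i)) -> soft_a_semi_open a (soft_bigunion F)) /\
  (forall (I : Type) (F : I -> softset X E),
      (forall i, soft_a_pre_open a (F i)) -> soft_a_pre_open a (soft_bigunion F)) /\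
  (forall (I : Type) (F : I -> softset X E),
      (forall i, soft_a_beta_open a (F i)) -> soft_a_beta_open a (soft_bigunion F)).
Proof.
  pose proof (soft_acl_monotone X E a) as Hcl.
  pose proof (soft_aint_monotone X E a) as Hint.
  split; [| split]; intros I F HF.
  - exact (soft_bigunion_postfixed _ F (soft_monotone_comp Hcl Hint) HF).
  - exact (soft_bigunion_postfixed _ F (soft_monotone_comp Hint Hcl) HF).
  - exact (soft_bigunion_postfixed _ F
             (soft_monotone_comp Hcl (soft_monotone_comp Hint Hcl)) HF).
Qed.
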